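(* Let $\rho>0$ and assume $\Gamma(0)<\Gamma(1)$ and $1+\rho\ln\mu(0)<0$. Let $\nu_\star(\rho)$ be the unique solution in $(0,\mu(1))$ of $1+\rho\ln G(\nu,\mu(1))=0$, and assume $1+\rho\ln\big(\Gamma(1)^{\nu_\star(\rho)}\Gamma(0)^{1-\nu_\star(\rho)}\big)<0$. Let $n\mapsto L_n$ be a $\rho$-admissible scaling. Then $\nu$ can be selected in the interval $(\nu_\star(\rho),\mu(1))$ such that for every sequence $(\ell_n)$ that is $\nu$-associated with the scaling, $\lim_{n\to\infty}\mathbb{E}[I^{(\ell_n)}_n(L_n)]=\infty$.
   Context: Homogeneous binary MAG model. Fix $\mu(0),\mu(1)\in(0,1)$ with $\mu(0)+\mu(1)=1$, and a symmetric $2\times2$ matrix $(q(a,b))$ with $q(0,1)=q(1,0)$ and $0<q(a,b)<1$. On a probability space, $\{A,A_\ell(u):\ell,u\ge1\}$ are i.i.d. $\{0,1\}$-valued with $\mathbb{P}[A=1]=\mu(1)$, independent of i.i.d. uniform$(0,1)$ variables $\{U(u,v):1\le u<v\}$, $U(v,u)=U(u,v)$. With $\mathbf A_L(u)=(A_1(u),\dots,A_L(u))$ and $Q_L(\mathbf a,\mathbf b)=\prod_{\ell=1}^Lq(a_\ell,b_\ell)$, the graph $\mathbb{M}(n;L)$ on $\{1,\dots,n\}$ has an edge between distinct $u,v$ iff $U(u,v)\le Q_L(\mathbf A_L(u),\mathbf A_L(v))$. Let $S_L(u)=A_1(u)+\dots+A_L(u)$; for $\ell\in\{0,\dots,L\}$,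 $I^{(\ell)}_n(L)$ is the number of nodes $u\in\{1,\dots,n\}$ isolated in $\mathbb{M}(n;L)$ with $S_L(u)=\ell$. $\Gamma(a)=\mathbb{E}[q(a,A)]$. A scaling $n\mapsto L_n$ of positive integers is $\rho$-admissible if $L_n\sim\rho\ln n$. For $\nu\in(0,1)$, a sequence $(\ell_n)$ of nonnegative integers is $\nu$-associated with the scaling if $\ell_n\le L_n$ for all $n$ and $\ell_n/L_n\to\nu$. For $0<\nu,\mu<1$, $G(\nu,\mu)=(\mu/\nu)^\nu\big((1-\mu)/(1-\nu)\big)^{1-\nu}$, extended continuously to $[0,1]$ by $G(0,\mu)=1-\mu$, $G(1,\mu)=\mu$. *)

From HB Require Import structures.
From mathcomp Require Import all_boot all_order all_algebra.
From mathcomp Require Import all_classical all_reals all_analysis.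
Set Implicit Arguments. Unset Strict Implicit. Unset Printing Implicit Defensive.
Import Order.TTheory GRing.Theory Num.Theory.
Local Open Scope ring_scope.

Section MAG.
Variable R : realType.

(* mu b = P[A = b], q a b = edge-probability factor. *)

Definition QL (q : bool -> bool -> R) (n L : nat)
    (a : {ffun 'I_n * 'I_L -> bool}) (u v : 'I_n) : R :=
  \prod_(l < L) q (a (u, l)) (a (v, l)).

(* Probability weight of the attribute configuration a (i.i.d. A_l(u) ~ mu). *)
Definition attr_weight (mu : bool -> R) (n L : nat)
    (a : {ffun 'I_n * 'I_L -> bool}) : R :=
  \prod_(p : 'I_n * 'I_L) mu (a p).

(* Conditional probability weight of the edge configuration e given a:
   for u < v the indicator e(u,v) of the edge {u,v} is Bernoulli(Q_L(A(u),A(v))),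
   independently over pairs (this is the law of 1{U(u,v) <= Q_L(...)});
   the coordinates (u,v) with ~(u < v) are unused and fixed to false. *)
Definition edge_weight (q : bool -> bool -> R) (n L : nat)
    (a : {ffun 'I_n * 'I_L -> bool}) (e : {ffun 'I_n * 'I_n -> bool}) : R :=
  \prod_(p : 'I_n * 'I_n)
     (if (p.1 < p.2)%N
      then (if e p then QL q a p.1 p.2 else 1 - QL q a p.1 p.2)
      else (if e p then 0 else 1)).

Definition adj (n : nat) (e : {ffun 'I_n * 'I_n -> bool}) (u v : 'I_n) : bool :=
  if (u < v)%N then e (u, v) else if (v < u)%N then e (v, u) else false.

Definition S_L (n L : nat) (a : {ffun 'I_n * 'I_L -> bool}) (u : 'I_n) : nat :=
  \sum_(l < L) (a (u, l) : nat).

Definition I_count (n L ell : nat) (a : {ffun 'I_n * 'I_L -> bool})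
    (e : {ffun 'I_n * 'I_n -> bool}) : nat :=
  #|[set u : 'I_n | [forall v : 'I_n, ~~ adj e u v] && (S_L a u == ell)]|.

Definition EI (mu : bool -> R) (q : bool -> bool -> R) (n L ell : nat) : R :=
  \sum_(a : {ffun 'I_n * 'I_L -> bool}) \sum_(e : {ffun 'I_n * 'I_n -> bool})
     attr_weight mu a * edge_weight q a e * (I_count ell a e)%:R.

Definition Gamma (mu : bool -> R) (q : bool -> bool -> R) (b : bool) : R :=
  mu false * q b false + mu true * q b true.

(* G(nu, m) with its continuous extension at nu = 0, 1 *)
Definition G (nu m : R) : R :=
  if nu == 0 then 1 - m
  else if nu == 1 then m
  else (m / nu) `^ nu * ((1 - m) / (1 - nu)) `^ (1 - nu).

End MAG.

(** By exchangeability, [E[I^(l)_n(L)] = n C(L,l) mu1^l mu0^(L-l) (1 - c)^(n-1)] with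
    [c = Gamma1^l Gamma0^(L-l)].  Writing [x = l/L], one has
    [C(L,l) mu1^l mu0^(L-l) = P(Bin(L,x) = l) exp(L ln G(x, mu1))], where
    [P(Bin(L,x) = l) >= 1/(L+1)] because [l] is the mode of [Bin(L,x)], and
    [c = exp(L ln(Gamma1^x Gamma0^(1-x)))]; Bernoulli's inequality gives
    [(1 - c)^(n-1) >= 1 - n c].  As [L ~ rho ln n] and [x -> nu], [n exp(L ln G(x, mu1))]
    and [n c] are [n^(k + o(1))] with [k] equal to [1 + rho ln G(nu, mu1)] and
    [1 + rho ln(Gamma1^nu Gamma0^(1-nu))] respectively.  The first exponent is positive
    on [(nu_star, mu1)], because [nu_star] is its only zero there and it equals 1 at
    [mu1]; the second one is negative at [nu_star], hence for [nu] slightly above it.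
    For such [nu], [n c -> 0] while [n exp(L ln G(x, mu1)) / (L+1) -> oo]. *)

From mathcomp Require Import all_boot all_order all_algebra.
From mathcomp Require Import all_classical all_reals all_analysis.
From mathcomp Require Import ring lra zify.
Import Order.TTheory GRing.Theory Num.Theory numFieldNormedType.Exports.
Local Open Scope classical_set_scope.
Local Open Scope ring_scope.
Set Implicit Arguments. Unset Strict Implicit. Unset Printing Implicit Defensive.

Lemma prodr_nat_forall (R : comNzSemiRingType) (I : finType) (b : I -> bool) :
  \prod_(i : I) ((b i)%:R : R) = ([forall i, b i])%:R.
Proof.
case: (boolP [forall i, b i]) => [/forallP bT|].
  by rewrite big1 // => i _; rewrite bT.
rewrite negb_forall => /existsP [i /negbTE bi].
by rewrite (bigD1 i) //= bi mul0r.
Qed.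

Lemma forall_nadjE n (e : {ffun 'I_n * 'I_n -> bool}) (u : 'I_n) :
  [forall v, ~~ adj e u v] =
  [forall p : 'I_n * 'I_n, ((p.1 < p.2)%N && ((p.1 == u) || (p.2 == u))) ==> ~~ e p].
Proof.
apply/forallP/forallP => [nadj [i j] /= | nadj v].
  apply/implyP => /andP [ij /orP [/eqP iu | /eqP ju]].
    by have := nadj j; rewrite /adj -iu ij.
  by have := nadj i; rewrite /adj -ju ltnNge (ltnW ij) /= ij.
rewrite /adj; case: (ltnP u v) => uv; first by have := nadj (u, v); rewrite /= uv eqxx.
case: (ltnP v u) => vu //.
by have := nadj (v, u); rewrite /= vu eqxx orbT.
Qed.

Lemma prod_incident_pairs (R : comNzSemiRingType) n (X : 'I_n -> 'I_n -> R) (u : 'I_n) :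
  (forall i j, X i j = X j i) ->
  \prod_(p : 'I_n * 'I_n)
      (if (p.1 < p.2)%N && ((p.1 == u) || (p.2 == u)) then X p.1 p.2 else 1)
  = \prod_(v | v != u) X u v.
Proof.
move=> Xsym.
rewrite -(pair_bigA _ (fun i j : 'I_n =>
  if (i < j)%N && ((i == u) || (j == u)) then X i j else 1)) /= (bigD1 u) //= eqxx.
have row_u : \prod_(j < n) (if (u < j)%N && true then X u j else 1) =
   \prod_(j | j != u) (if (u < j)%N then X u j else 1).
  by rewrite (bigD1 u) //= ltnn mul1r; apply: eq_bigr => j _; rewrite andbT.
have col_u : \prod_(i | true && (i != u)) \prod_(j < n)
      (if (i < j)%N && ((i == u) || (j == u)) then X i j else 1)
   = \prod_(i | i != u) (if (i < u)%N then X u i else 1).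
  apply: eq_bigr => i iu; rewrite (bigD1 u) //= eqxx orbT andbT big1 ?mulr1.
    by rewrite Xsym.
  by move=> j ju; rewrite (negbTE iu) (negbTE ju) andbF.
rewrite row_u col_u -big_split /=; apply: eq_bigr => v vu.
case: (ltngtP u v) => [||/val_inj uv]; rewrite ?mulr1 ?mul1r //.
by rewrite uv eqxx in vu.
Qed.

Section ClosedForm.
Variable R : realType.
Variables (mu : bool -> R) (q : bool -> bool -> R).

Lemma sum_edge_weight_isolated n L (a : {ffun 'I_n * 'I_L -> bool}) (u : 'I_n) :
  \sum_(e : {ffun 'I_n * 'I_n -> bool}) edge_weight q a e * ([forall v, ~~ adj e u v])%:R
  = \prod_(p : 'I_n * 'I_n)
      (if (p.1 < p.2)%N && ((p.1 == u) || (p.2 == u)) then 1 - QL q a p.1 p.2 else 1).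
Proof.
under eq_bigr => e _ do rewrite forall_nadjE -prodr_nat_forall /edge_weight -big_split /=.
rewrite -(bigA_distr_bigA (fun (p : 'I_n * 'I_n) (b : bool) =>
   ((if (p.1 < p.2)%N then if b then QL q a p.1 p.2 else 1 - QL q a p.1 p.2
     else if b then 0 else 1) *
   (((p.1 < p.2)%N && ((p.1 == u) || (p.2 == u))) ==> ~~ b)%:R))).
apply: eq_bigr => p _; rewrite big_bool /=.
case: (p.1 < p.2)%N; case: ((p.1 == u) || (p.2 == u));
  by rewrite /= ?mulr1 ?mulr0 ?add0r ?addr0 ?subrKC.
Qed.

Hypothesis q_sym : forall a b, q a b = q b a.

Lemma QL_sym n L (a : {ffun 'I_n * 'I_L -> bool}) u v : QL q a u v = QL q a v u.
Proof. by apply: eq_bigr => l _; rewrite q_sym. Qed.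

Lemma EI_sum_isolated n L ell :
  EI mu q n L ell = \sum_(u < n) \sum_(a : {ffun 'I_n * 'I_L -> bool})
     attr_weight mu a * (S_L a u == ell)%:R * \prod_(v | v != u) (1 - QL q a u v).
Proof.
have I_countE (a : {ffun 'I_n * 'I_L -> bool}) (e : {ffun 'I_n * 'I_n -> bool}) :
    (I_count ell a e)%:R = \sum_(u < n) (([forall v, ~~ adj e u v])%:R * (S_L a u == ell)%:R : R).
  rewrite /I_count -sum1dep_card natr_sum big_mkcond /=.
  apply: congr_big => // u _ /=.
  by case: [forall v, _]; case: (S_L a u == ell); rewrite /= ?mulr1 ?mulr0.
rewrite /EI; under eq_bigr => a _ do under eq_bigr => e _ do rewrite I_countE mulr_sumr.
under eq_bigr => a _ do rewrite exchange_big /=.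
rewrite exchange_big /=; apply: eq_bigr => u _; apply: eq_bigr => a _.
rewrite -(@prod_incident_pairs _ _ (fun i j => 1 - QL q a i j)); last first.
  by move=> i j; rewrite QL_sym.
by rewrite -sum_edge_weight_isolated mulr_sumr; apply: eq_bigr => e _; ring.
Qed.

Definition row_weight L (s : {ffun 'I_L -> bool}) : R := \prod_(l < L) mu (s l).
Definition row_ones L (s : {ffun 'I_L -> bool}) : nat := \sum_(l < L) (s l : nat).
Definition row_Q L (r s : {ffun 'I_L -> bool}) : R := \prod_(l < L) q (r l) (s l).

Lemma sum_attr_rowsE n L ell (u : 'I_n) :
  \sum_(a : {ffun 'I_n * 'I_L -> bool})
     attr_weight mu a * (S_L a u == ell)%:R * \prod_(v | v != u) (1 - QL q a u v)
  = \sum_(b : {ffun 'I_n -> {ffun 'I_L -> bool}})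
     (\prod_(i < n) row_weight (b i)) * (row_ones (b u) == ell)%:R *
        \prod_(v | v != u) (1 - row_Q (b u) (b v)).
Proof.
pose curry (a : {ffun 'I_n * 'I_L -> bool}) := [ffun i => [ffun l => a (i, l)]].
pose uncurry (b : {ffun 'I_n -> {ffun 'I_L -> bool}}) := [ffun p : 'I_n * 'I_L => b p.1 p.2].
have uncurry_bij : bijective uncurry.
  exists curry => [b|a]; first by apply/ffunP => i; apply/ffunP => l; rewrite !ffunE.
  by apply/ffunP => -[i l]; rewrite !ffunE.
rewrite (reindex uncurry (onW_bij _ uncurry_bij)) /=; apply: eq_bigr => b _.
congr (_ * _ * _).
- rewrite /attr_weight (eq_bigr (fun p => mu (b p.1 p.2))) => [|p _]; last by rewrite ffunE.
  by rewrite -(pair_bigA _ (fun i l => mu (b i l))).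
- by congr (_ == _)%:R; apply: eq_bigr => l _; rewrite ffunE.
- by apply: eq_bigr => v _; congr (_ - _); apply: eq_bigr => l _; rewrite !ffunE.
Qed.

Lemma sum_rows_factor n L ell (u : 'I_n) :
  \sum_(b : {ffun 'I_n -> {ffun 'I_L -> bool}})
     (\prod_(i < n) row_weight (b i)) * (row_ones (b u) == ell)%:R *
        \prod_(v | v != u) (1 - row_Q (b u) (b v))
  = \sum_(r : {ffun 'I_L -> bool}) row_weight r * (row_ones r == ell)%:R *
        \prod_(v | v != u) (\sum_(s : {ffun 'I_L -> bool}) row_weight s * (1 - row_Q r s)).
Proof.
transitivity (\sum_(b : {ffun 'I_n -> {ffun 'I_L -> bool}}) \sum_(r : {ffun 'I_L -> bool})
   (b u == r)%:R * ((\prod_(i < n) row_weight (b i)) * (row_ones (b u) == ell)%:R *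
        \prod_(v | v != u) (1 - row_Q (b u) (b v)))).
  apply: eq_bigr => b _; rewrite (bigD1 (b u)) //= eqxx mul1r [X in _ = _ + X]big1 ?addr0 //.
  by move=> r /negbTE; rewrite eq_sym => ->; rewrite mul0r.
rewrite exchange_big /=; apply: eq_bigr => r _.
pose K (i : 'I_n) (s : {ffun 'I_L -> bool}) :=
  if i == u then (s == r)%:R * row_weight s * (row_ones s == ell)%:R
  else row_weight s * (1 - row_Q r s).
transitivity (\sum_(b : {ffun 'I_n -> {ffun 'I_L -> bool}}) \prod_(i < n) K i (b i)).
  apply: eq_bigr => b _; rewrite (bigD1 u) //= [in RHS](bigD1 u) //= /K eqxx.
  case: (eqVneq (b u) r) => [->|]; last by rewrite !mul0r.
  rewrite [in RHS](eq_bigr (fun i => row_weight (b i) * (1 - row_Q r (b i)))) => [|i /negbTE -> //].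
  by rewrite big_split /=; ring.
rewrite -(bigA_distr_bigA K) (bigD1 u) //= {1}/K eqxx (bigD1 r) //= eqxx mul1r big1.
  by rewrite addr0; congr (_ * _); apply: eq_bigr => i /negbTE iu; rewrite /K iu.
by move=> s /negbTE ->; rewrite !mul0r.
Qed.

Lemma prod_row_ones (f : bool -> R) L (r : {ffun 'I_L -> bool}) :
  \prod_(l < L) f (r l) = f true ^+ row_ones r * f false ^+ (L - row_ones r).
Proof.
have onesE : row_ones r = #|[pred l | r l]|.
  rewrite /row_ones -sum1_card [RHS]big_mkcond /=.
  by apply: eq_bigr => l _; rewrite inE; case: (r l).
have zerosE : #|[predC [pred l | r l]]| = (L - row_ones r)%N.
  by rewrite onesE -[X in (X - _)%N](card_ord L) -(cardC [pred l | r l]) addKn.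
rewrite (bigID r) /= (eq_bigr (fun _ => f true)) => [|l -> //].
rewrite [X in _ * X](eq_bigr (fun _ => f false)) => [|l /negbTE -> //].
rewrite -zerosE onesE -!prodr_const.
by congr (_ * _); apply: eq_bigl => l; rewrite !inE.
Qed.

Lemma sum_row_ones_eq L ell :
  \sum_(r : {ffun 'I_L -> bool}) ((row_ones r == ell)%:R : R) = 'C(L, ell)%:R.
Proof.
pose indicator (A : {set 'I_L}) : {ffun 'I_L -> bool} := [ffun l => l \in A].
have indicator_bij : bijective indicator.
  exists (fun r : {ffun 'I_L -> bool} => [set l | r l]%SET) => [A|r].
    by apply/setP => l; rewrite inE ffunE.
  by apply/ffunP => l; rewrite ffunE inE.
rewrite (reindex indicator (onW_bij _ indicator_bij)) /=.
rewrite -[L in 'C(L, _)]card_ord -card_draws -sum1dep_card natr_sum [in RHS]big_mkcond.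
apply: eq_bigr => A _.
have -> : row_ones (indicator A) = #|A|.
  rewrite /row_ones -sum1_card [RHS]big_mkcond /=.
  by apply: eq_bigr => l _; rewrite ffunE; case: (l \in A).
by case: (#|A| == ell).
Qed.

Hypothesis mu_sum : mu false + mu true = 1.

Lemma sum_row_weight_noedge L (r : {ffun 'I_L -> bool}) :
  \sum_(s : {ffun 'I_L -> bool}) row_weight s * (1 - row_Q r s)
  = 1 - \prod_(l < L) Gamma mu q (r l).
Proof.
have total : \sum_(s : {ffun 'I_L -> bool}) row_weight s = 1.
  rewrite /row_weight -(bigA_distr_bigA (fun _ b => mu b)) big1 // => l _.
  by rewrite big_bool /= addrC.
have edge : \sum_(s : {ffun 'I_L -> bool}) row_weight s * row_Q r s
    = \prod_(l < L) Gamma mu q (r l).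
  under eq_bigr => s _ do rewrite /row_weight /row_Q -big_split /=.
  rewrite -(bigA_distr_bigA (fun l b => mu b * q (r l) b)).
  by apply: eq_bigr => l _; rewrite big_bool /Gamma addrC.
under eq_bigr => s _ do rewrite mulrBr mulr1.
by rewrite sumrB total edge.
Qed.

Lemma EI_closed n L ell :
  EI mu q n L ell = n%:R * ('C(L, ell)%:R * (mu true ^+ ell * mu false ^+ (L - ell) *
     (1 - Gamma mu q true ^+ ell * Gamma mu q false ^+ (L - ell)) ^+ n.-1)).
Proof.
rewrite EI_sum_isolated // -[X in X%:R * _](card_ord n) mulr_natl -sumr_const.
apply: eq_bigr => u _; rewrite sum_attr_rowsE sum_rows_factor.
under eq_bigr => r _ do under eq_bigr => v _ do rewrite sum_row_weight_noedge.
rewrite -sum_row_ones_eq mulr_suml; apply: eq_bigr => r _.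
rewrite prodr_const cardC1 card_ord.
have [<-|] := eqVneq (row_ones r) ell; last by rewrite !mulr0 !mul0r.
by rewrite /row_weight !prod_row_ones mulr1 mul1r.
Qed.

End ClosedForm.

Section BinomialMode.
Variable R : realType.

Lemma binomial_pmfE L (x : R) k :
  binomial_pmf L x k = 'C(L, k)%:R * x ^+ k * (1 - x) ^+ (L - k).
Proof. by rewrite /binomial_pmf -mulr_natl mulrA. Qed.

Lemma sum_binomial_pmf L (x : R) : \sum_(k < L.+1) binomial_pmf L x k = 1.
Proof.
have := exprDn (1 - x) x L; rewrite subrK expr1n => ->.
by apply: eq_bigr => k _; rewrite binomial_pmfE -mulr_natl; ring.
Qed.

Lemma binomial_pmfS L (x : R) k : (k < L)%N ->
  binomial_pmf L x k.+1 * (k.+1%:R * (1 - x)) = binomial_pmf L x k * ((L - k)%:R * x).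
Proof.
move=> kL; rewrite !binomial_pmfE -(subnSK kL) !exprS.
have binS : 'C(L, k.+1)%:R * k.+1%:R = (L - k)%:R * 'C(L, k)%:R :> R.
  by rewrite -!natrM mulnC mul_bin_left.
transitivity ('C(L, k.+1)%:R * k.+1%:R * (x * x ^+ k * (1 - x) ^+ (L - k.+1) * (1 - x)));
  by [ring | rewrite binS (subnSK kL); ring].
Qed.

Lemma binomial_pmf_le_mode L l k : (0 < l < L)%N -> (k <= L)%N ->
  binomial_pmf L (l%:R / L%:R : R) k <= binomial_pmf L (l%:R / L%:R) l.
Proof.
move=> /andP[l0 lL] kL; set x : R := l%:R / L%:R; set b := binomial_pmf L x.
have L0 : 0 < L%:R :> R by rewrite ltr0n; lia.
have xL : x * L%:R = l%:R by rewrite /x divfK ?gt_eqF.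
have x0 : 0 < x by rewrite divr_gt0 // ltr0n.
have x1 : x < 1 by rewrite ltr_pdivrMr // mul1r ltr_nat.
have b_up i : (i < l)%N -> b i <= b i.+1.
  move=> il; have c0 : 0 < (L - i)%:R * x by rewrite mulr_gt0 // ltr0n subn_gt0; lia.
  rewrite -(ler_pM2r c0) -binomial_pmfS; last lia.
  rewrite ler_wpM2l ?binomial_pmf_ge0 ?ltW ?x0 ?x1 // natrB; last lia.
  have : i.+1%:R <= l%:R :> R by rewrite ler_nat.
  by rewrite -natr1; nra.
have b_down i : (l <= i < L)%N -> b i.+1 <= b i.
  move=> /andP[li iL]; have c0 : 0 < i.+1%:R * (1 - x) by rewrite mulr_gt0 ?subr_gt0.
  rewrite -(ler_pM2r c0) binomial_pmfS // ler_wpM2l ?binomial_pmf_ge0 ?ltW ?x0 ?x1 //.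
  have : l%:R <= i%:R :> R by rewrite ler_nat.
  by rewrite natrB ?(ltnW iL) // -natr1; nra.
have [kl|lk] := leqP k l.
  apply: (@homo_leq_in _ [pred i | (i <= l)%N] b (fun u v => u <= v)); rewrite ?inE //.
  - exact: le_trans.
  - by move=> i j _; rewrite !inE => jl i' /andP[_ ij]; rewrite inE; lia.
  - by move=> i _; rewrite inE => /b_up.
apply: (@homo_leq_in _ [pred i | (l <= i <= L)%N] b (fun u v => v <= u));
  rewrite ?inE ?leqnn ?(ltnW lL) ?lk ?kL //.
- by move=> y u v uy yv; apply: le_trans uy.
- by move=> i j; rewrite !inE => /andP[li _] /andP[_ jL] i' /andP[ii' i'j]; rewrite inE; lia.
- by move=> i /andP[li _] /andP[_ iL]; apply: b_down; rewrite li.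
- by rewrite andbT ltnW.
- exact: ltnW.
Qed.

Lemma binomial_pmf_mode_ge L l : (0 < l < L)%N ->
  1 <= L.+1%:R * binomial_pmf L (l%:R / L%:R : R) l.
Proof.
move=> lL; set x : R := l%:R / L%:R.
have : \sum_(k < L.+1) binomial_pmf L x k <= \sum_(k < L.+1) binomial_pmf L x l.
  by apply: ler_sum => k _; apply: binomial_pmf_le_mode; rewrite // -ltnS.
by rewrite sum_binomial_pmf sumr_const card_ord mulr_natl.
Qed.

End BinomialMode.

Lemma bernoulli_ineq (R : realDomainType) (c : R) m : c <= 1 -> 1 - m%:R * c <= (1 - c) ^+ m.
Proof.
move=> c1; elim: m => [|m IH]; first by rewrite mul0r subr0 expr0.
rewrite exprSr (le_trans _ (ler_wpM2r _ IH)) ?subr_ge0 //.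
have : 0 <= m%:R :> R by [].
by rewrite -natr1; nra.
Qed.

Section Exponents.
Variable R : realType.

Definition lnG (nu m : R) := nu * ln (m / nu) + (1 - nu) * ln ((1 - m) / (1 - nu)).
Definition ln_mix (a b nu : R) := nu * ln a + (1 - nu) * ln b.

Lemma ln_G (m nu : R) : 0 < m < 1 -> 0 < nu < 1 -> ln (G nu m) = lnG nu m.
Proof.
move=> /andP[m0 m1] /andP[nu0 nu1].
rewrite /G (gt_eqF nu0) (lt_eqF nu1) lnM ?posrE ?powR_gt0 ?divr_gt0 ?subr_gt0 //.
by rewrite !ln_powR.
Qed.

Lemma ln_powR_mix (a b nu : R) : 0 < a -> 0 < b ->
  ln (a `^ nu * b `^ (1 - nu)) = ln_mix a b nu.
Proof. by move=> a0 b0; rewrite lnM ?posrE ?powR_gt0 // !ln_powR. Qed.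

Lemma lnG_id (m : R) : 0 < m < 1 -> lnG m m = 0.
Proof.
by move=> /andP[m0 m1]; rewrite /lnG !divff ?ln1 ?mulr0 ?addr0 // ?subr_eq0 gt_eqF.
Qed.

Lemma lnG_cvg (m nu : R) : 0 < m < 1 -> 0 < nu < 1 -> lnG x m @[x --> nu] --> lnG nu m.
Proof.
move=> /andP[m0 m1] /andP[nu0 nu1].
have ln_cvg (f : R -> R) : f x @[x --> nu] --> f nu -> 0 < f nu ->
    ln (f x) @[x --> nu] --> ln (f nu).
  by move=> f_cvg f0; apply: (cvg_comp _ _ f_cvg); apply: continuous_ln.
apply: cvgD; apply: cvgM.
- exact: cvg_id.
- apply: ln_cvg; last by rewrite divr_gt0.
  by apply: cvgM; [exact: cvg_cst | apply: cvgV; [rewrite gt_eqF | exact: cvg_id]].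
- exact: cvgB (cvg_cst _) cvg_id.
- apply: ln_cvg; last by rewrite divr_gt0 ?subr_gt0.
  apply: cvgM; first exact: cvg_cst.
  by apply: cvgV; [rewrite subr_eq0 gt_eqF | exact: cvgB (cvg_cst _) cvg_id].
Qed.

Lemma ln_mix_cvg (a b nu : R) : ln_mix a b x @[x --> nu] --> ln_mix a b nu.
Proof.
apply: cvgD; apply: cvgM; try exact: cvg_cst; first exact: cvg_id.
exact: cvgB (cvg_cst _) cvg_id.
Qed.

Lemma expR_ln_mix (a b : R) L l : 0 < a -> 0 < b -> (0 < L)%N -> (l <= L)%N ->
  a ^+ l * b ^+ (L - l) = expR (L%:R * ln_mix a b (l%:R / L%:R)).
Proof.
move=> a0 b0 L0 lL.
have L0' : L%:R != 0 :> R by rewrite pnatr_eq0 -lt0n.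
rewrite -{1}(lnK a0) -{1}(lnK b0) -!expRM_natl -expRD /ln_mix natrB //; congr expR.
by field.
Qed.

Lemma binomial_pmf_tilt (m : R) L l : 0 < m < 1 -> (0 < l < L)%N ->
  binomial_pmf L m l =
  binomial_pmf L (l%:R / L%:R) l * expR (L%:R * lnG (l%:R / L%:R) m).
Proof.
move=> /andP[m0 m1] /andP[l0 lL]; set x : R := l%:R / L%:R.
have L0 : 0 < L%:R :> R by rewrite ltr0n; lia.
have x0 : 0 < x by rewrite divr_gt0 // ltr0n.
have x1 : x < 1 by rewrite ltr_pdivrMr // mul1r ltr_nat.
have tilt y z : 0 < y -> 0 < z -> y ^+ l * z ^+ (L - l) =
    x ^+ l * (1 - x) ^+ (L - l) * expR (L%:R * ln_mix (y / x) (z / (1 - x)) x).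
  move=> y0 z0; rewrite -expR_ln_mix ?divr_gt0 ?subr_gt0 ?ltr0n //; [|lia..].
  rewrite mulrACA -!exprMn (mulrC x) (mulrC (1 - x)) !divfK ?gt_eqF //.
  by rewrite subr_gt0.
rewrite !binomial_pmfE -!mulrA tilt ?subr_gt0 // /lnG /ln_mix; ring.
Qed.

End Exponents.

Section LowerBound.
Variable R : realType.
Variables (mu : bool -> R) (q : bool -> bool -> R).
Hypothesis mu_itv : forall b, 0 < mu b < 1.
Hypothesis mu_sum : mu false + mu true = 1.
Hypothesis q_sym : forall a b, q a b = q b a.
Hypothesis q_itv : forall a b, 0 < q a b < 1.

Lemma Gamma_itv b : 0 < Gamma mu q b < 1.
Proof.
have /andP[? ?] := mu_itv false; have /andP[? ?] := mu_itv true.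
have /andP[? ?] := q_itv b false; have /andP[? ?] := q_itv b true.
have := mu_sum; rewrite /Gamma => ?; apply/andP; split; nra.
Qed.

Lemma EI_ge n L l : (0 < l < L)%N ->
  n%:R * expR (L%:R * lnG (l%:R / L%:R) (mu true)) / L.+1%:R *
    (1 - n%:R * expR (L%:R * ln_mix (Gamma mu q true) (Gamma mu q false) (l%:R / L%:R)))
  <= EI mu q n L l.
Proof.
move=> lL; set x := l%:R / L%:R; have [l0 lL'] := andP lL.
have /andP[G10 _] := Gamma_itv true; have /andP[G00 _] := Gamma_itv false.
set E := expR _; set c := expR _.
have mu0E : mu false = 1 - mu true by rewrite -mu_sum addrK.
have cE : c = Gamma mu q true ^+ l * Gamma mu q false ^+ (L - l).
  by rewrite expR_ln_mix //; lia.
have c1 : c <= 1.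
  rewrite cE mulr_ile1 ?exprn_ge0 ?exprn_ile1 ?ltW //.
  - by have /andP[] := Gamma_itv true.
  - by have /andP[] := Gamma_itv false.
have pmf_ge : L.+1%:R^-1 <= binomial_pmf L x l.
  by rewrite -[L.+1%:R^-1]mul1r ler_pdivrMr ?ltr0n // mulrC; apply: binomial_pmf_mode_ge.
have -> : EI mu q n L l = n%:R * E * binomial_pmf L x l * (1 - c) ^+ n.-1.
  rewrite EI_closed // -cE mu0E.
  transitivity (n%:R * binomial_pmf L (mu true) l * (1 - c) ^+ n.-1).
    by rewrite binomial_pmfE !mulrA.
  by rewrite binomial_pmf_tilt // (mulrC _ E) mulrA.
have nE0 : 0 <= n%:R * E by rewrite mulr_ge0 ?expR_ge0.
have c0 : 0 <= c by rewrite expR_ge0.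
rewrite (le_trans (ler_wpM2l _ (_ : 1 - n%:R * c <= (1 - c) ^+ n.-1))) //.
- by rewrite divr_ge0.
- apply: le_trans (bernoulli_ineq _ c1).
  by rewrite lerB // ler_wpM2r // ler_nat leq_pred.
- apply: ler_wpM2r; first by rewrite exprn_ge0 // subr_ge0.
  exact: ler_wpM2l.
Qed.

End LowerBound.

Section ChoiceOfNu.
Variable R : realType.

Lemma gt0_after_unique_root (F : R -> R) (m z : R) :
  0 < z -> {in `]0, m], continuous F} -> 0 < F m ->
  (forall y, 0 < y < m -> F y = 0 -> y = z) ->
  forall y, z < y < m -> 0 < F y.
Proof.
move=> z0 F_cont Fm0 F_root y /andP[zy ym]; rewrite ltNge; apply/negP => Fy0.
have F_cont_ym : {within `[y, m], continuous F}.
  apply: continuous_in_subspaceT => x; rewrite in_setE /= in_itv /= => /andP[yx xm].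
  by apply: F_cont; rewrite in_itv /= xm andbT (lt_trans z0 (lt_le_trans zy yx)).
have [|c] := IVT (ltW ym) F_cont_ym (v := 0).
  by rewrite ge_min le_max Fy0 (ltW Fm0) orbT.
rewrite in_itv /= => /andP[yc cm] Fc0.
have cm' : c < m by rewrite lt_neqAle cm andbT; apply: contraTneq Fm0 => <-; rewrite Fc0 ltxx.
have := F_root c; rewrite Fc0 (lt_le_trans (lt_trans z0 zy) yc) cm' => /(_ isT erefl) cz.
by move: yc; rewrite cz leNgt zy.
Qed.

Lemma exists_nu (m rho z a b : R) : 0 < m < 1 -> 0 < rho -> 0 < z < m ->
  (forall y, 0 < y < m -> 1 + rho * lnG y m = 0 -> y = z) ->
  1 + rho * ln_mix a b z < 0 ->
  exists nu, [/\ z < nu < m, 0 < 1 + rho * lnG nu m & 1 + rho * ln_mix a b nu < 0].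
Proof.
move=> /andP[m0 m1] rho0 /andP[z0 zm] lnG_root mix_z.
(* [ln_mix a b] is affine with slope [D]; a step [s] with [2 rho s (|D| + 1) <= -eta]
   keeps it negative. *)
set D := ln a - ln b; set eta := 1 + rho * ln_mix a b z in mix_z *.
have D1 : 0 < `|D| + 1 by rewrite ltr_pwDr.
set s := Num.min ((m - z) / 2) (- eta / (2 * rho * (`|D| + 1))).
have s0 : 0 < s by rewrite lt_min divr_gt0 ?subr_gt0 //= divr_gt0 ?oppr_gt0 ?mulr_gt0.
have s_m : s <= (m - z) / 2 by rewrite ge_min lexx.
have s_eta : s * (2 * rho * (`|D| + 1)) <= - eta.
  by rewrite -ler_pdivlMr ?mulr_gt0 // ge_min lexx orbT.
exists (z + s); split.
- by apply/andP; split; lra.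
- apply: (gt0_after_unique_root (F := fun y => 1 + rho * lnG y m) (m := m) z0) => //.
  + move=> y; rewrite in_itv /= => /andP[y0 ym].
    apply: cvgD (cvg_cst _) (cvgM (cvg_cst _) (lnG_cvg _ _)); rewrite ?m0 ?y0 //.
    exact: le_lt_trans ym m1.
  + by rewrite /= lnG_id ?m0 // mulr0 addr0.
  + by apply/andP; split; lra.
- have -> : 1 + rho * ln_mix a b (z + s) = eta + rho * s * D.
    by rewrite /eta /ln_mix /D; ring.
  have sD : rho * s * D <= rho * s * (`|D| + 1).
    apply: ler_wpM2l; first by rewrite mulr_ge0 ?ltW.
    by rewrite (le_trans (ler_norm D)) ?lerDl.
  have : rho * s * (`|D| + 1) * 2 <= - eta.
    by rewrite (_ : _ * 2 = s * (2 * rho * (`|D| + 1))) //; ring.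
  lra.
Qed.

End ChoiceOfNu.

Section LogScale.
Variable R : realType.

Lemma nbhs_infty_ln_ger (T : R) : \forall n \near \oo, T <= ln (n%:R : R).
Proof.
near=> n; rewrite -ler_expR lnK ?posrE; last by near: n; apply: nbhs_infty_gtr.
by near: n; apply: nbhs_infty_ger.
Unshelve. all: end_near.
Qed.

Lemma expR_ln_mulE n (c y : R) : (1 < n)%N ->
  expR (ln (n%:R : R) * (1 + c / ln n%:R * y)) = n%:R * expR (c * y).
Proof.
move=> n1; have ln_gt0 : 0 < ln (n%:R : R) by rewrite ln_gt0 // ltr1n.
by rewrite mulrDr mulr1 mulrA mulrCA divff ?gt_eqF // mulr1 expRD lnK // posrE ltr0n ltnW.
Qed.

Lemma expR_ln_mul_cvg0 (b : nat -> R) (beta : R) : beta < 0 -> b n @[n --> \oo] --> beta ->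
  expR (ln (n%:R : R) * b n) @[n --> \oo] --> 0.
Proof.
move=> beta0 b_cvg; apply/cvgr0Pnorm_lt => e e0.
near=> n; rewrite ger0_norm ?expR_ge0 // -[e]lnK ?posrE // ltr_expR.
have b_le : b n < beta / 2 by near: n; apply: (cvgr_lt _ b_cvg); lra.
have t_ge : 2 * (`|ln e| + 1) / - beta <= ln (n%:R : R) by near: n; exact: nbhs_infty_ln_ger.
have t0 : 0 <= ln (n%:R : R).
  by apply: le_trans t_ge; rewrite divr_ge0 ?oppr_ge0 ?ltW // mulr_ge0 ?addr_ge0.
rewrite ler_pdivrMr ?oppr_gt0 // in t_ge.
have := ler_norm (- ln e); rewrite normrN.
have := ler_wpM2l t0 (ltW b_le); nra.
Unshelve. all: end_near.
Qed.

Lemma expR_ln_mul_div_cvgy (a b : nat -> R) (alpha beta : R) : 0 < beta ->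
  (forall n, 0 <= a n) -> a n @[n --> \oo] --> alpha -> b n @[n --> \oo] --> beta ->
  expR (ln (n%:R : R) * b n) / (ln (n%:R : R) * a n + 1) @[n --> \oo] --> +oo.
Proof.
move=> beta0 a_ge0 a_cvg b_cvg; apply/cvgryPge => A.
set K := `|alpha| + 2; have K0 : 0 < K by rewrite ltr_pwDr.
near=> n.
have b_ge : beta / 2 < b n by near: n; apply: (cvgr_gt _ b_cvg); lra.
have a_le : a n < `|alpha| + 1.
  by near: n; apply: (cvgr_lt _ a_cvg); rewrite (le_lt_trans (ler_norm alpha)) ?ltrDl.
have t1 : 1 <= ln (n%:R : R) by near: n; exact: nbhs_infty_ln_ger.
have tA : 8 * K * A / beta ^+ 2 <= ln (n%:R : R) by near: n; exact: nbhs_infty_ln_ger.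
set t := ln (n%:R : R) in t1 tA *; have t0 : 0 <= t := le_trans ler01 t1.
have den0 : 0 < t * a n + 1 by rewrite ltr_pwDr ?mulr_ge0.
have den_le : t * a n + 1 <= K * t by rewrite /K; nra.
have exp_ge : (t * beta) ^+ 2 / 8 <= expR (t * b n).
  have tb0 : 0 <= t * (beta / 2) by rewrite mulr_ge0 // divr_ge0 ?ltW.
  apply: le_trans (le_trans (expR_ge1Dxn 1 tb0) _); last first.
    by rewrite ler_expR ler_wpM2l // ltW.
  rewrite (_ : 2`!%:R = 2 :> R) // (_ : (t * beta) ^+ 2 / 8 = (t * (beta / 2)) ^+ 2 / 2).
    by rewrite lerDr.
  by field.
have At : A * (K * t) <= (t * beta) ^+ 2 / 8.
  rewrite ler_pdivrMr ?exprn_gt0 // in tA.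
  have := ler_wpM2l t0 tA; nra.
rewrite ler_pdivlMr //; apply: le_trans exp_ge.
have [A0|A0] := leP A 0; last exact: le_trans (ler_wpM2l (ltW A0) den_le) At.
apply: (@le_trans _ _ 0); first by rewrite mulr_le0_ge0 // ltW.
by rewrite divr_ge0 ?sqr_ge0.
Unshelve. all: end_near.
Qed.

End LogScale.

Section Asymptotics.
Variable R : realType.
Variables (mu : bool -> R) (q : bool -> bool -> R).
Hypothesis mu_itv : forall b, 0 < mu b < 1.
Hypothesis mu_sum : mu false + mu true = 1.
Hypothesis q_sym : forall a b, q a b = q b a.
Hypothesis q_itv : forall a b, 0 < q a b < 1.
Variables (rho nu : R) (L ell : nat -> nat).
Hypothesis rho_gt0 : 0 < rho.
Hypothesis nu_itv : 0 < nu < 1.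
Hypothesis L_gt0 : forall n, (0 < L n)%N.
Hypothesis L_cvg : (fun n : nat => (L n)%:R / (rho * ln (n%:R : R))) @ \oo --> (1 : R).
Hypothesis ell_cvg : (fun n : nat => (ell n)%:R / (L n)%:R : R) @ \oo --> nu.

Lemma L_over_ln_cvg : (L n)%:R / ln (n%:R : R) @[n --> \oo] --> rho.
Proof.
have -> : (fun n => (L n)%:R / ln (n%:R : R)) =
          (fun n => rho * ((L n)%:R / (rho * ln (n%:R : R)))).
  by apply/funext => n; rewrite invfM mulrCA mulVKf ?gt_eqF.
by rewrite -[X in _ --> X]mulr1; apply: cvgM => //; exact: cvg_cst.
Qed.

Lemma ell_inside : \forall n \near \oo, (0 < ell n < L n)%N.
Proof.
near=> n.
have L0 : 0 < (L n)%:R :> R by rewrite ltr0n.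
have x_gt0 : 0 < (ell n)%:R / (L n)%:R :> R.
  by near: n; apply: (cvgr_gt _ ell_cvg); case/andP: nu_itv.
have x_lt1 : (ell n)%:R / (L n)%:R < 1 :> R.
  by near: n; apply: (cvgr_lt _ ell_cvg); case/andP: nu_itv.
rewrite pmulr_lgt0 ?invr_gt0 // ltr0n in x_gt0.
by rewrite ltr_pdivrMr // mul1r ltr_nat in x_lt1; rewrite x_gt0 x_lt1.
Unshelve. all: end_near.
Qed.

Local Notation ratio n := ((ell n)%:R / (L n)%:R : R).

Lemma exponent_cvg (f : R -> R) : f x @[x --> nu] --> f nu ->
  1 + (L n)%:R / ln (n%:R : R) * f (ratio n) @[n --> \oo] --> 1 + rho * f nu.
Proof.
move=> f_cvg; apply: cvgD; first exact: cvg_cst.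
exact: cvgM L_over_ln_cvg (cvg_comp _ _ ell_cvg f_cvg).
Qed.

Lemma L_over_ln_ge0 n : 0 <= (L n)%:R / ln (n%:R : R).
Proof. by rewrite divr_ge0 //; case: n => [|n]; [rewrite ln0 | rewrite ln_ge0 // ler1n]. Qed.

Lemma tilt_cvgy : 0 < 1 + rho * lnG nu (mu true) ->
  n%:R * expR ((L n)%:R * lnG (ratio n) (mu true)) / (L n).+1%:R @[n --> \oo] --> +oo.
Proof.
move=> lnG_pos; apply: cvg_trans (expR_ln_mul_div_cvgy lnG_pos L_over_ln_ge0
  L_over_ln_cvg (exponent_cvg (lnG_cvg (mu_itv true) nu_itv))).
apply: near_eq_cvg; near=> n.
have n1 : (1 < n)%N by near: n; exact: nbhs_infty_gt.
have ln_gt0 : 0 < ln (n%:R : R) by rewrite ln_gt0 // ltr1n.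
by rewrite /= expR_ln_mulE // [ln _ * _]mulrC divfK ?gt_eqF // natr1.
Unshelve. all: end_near.
Qed.

Lemma isolation_cvg0 : 1 + rho * ln_mix (Gamma mu q true) (Gamma mu q false) nu < 0 ->
  n%:R * expR ((L n)%:R * ln_mix (Gamma mu q true) (Gamma mu q false) (ratio n))
    @[n --> \oo] --> 0.
Proof.
move=> mix_neg; apply: cvg_trans (expR_ln_mul_cvg0 mix_neg
  (exponent_cvg (@ln_mix_cvg _ _ _ nu))).
apply: near_eq_cvg; near=> n.
by rewrite /= expR_ln_mulE //; near: n; exact: nbhs_infty_gt.
Unshelve. all: end_near.
Qed.

Lemma EI_cvgy : 0 < 1 + rho * lnG nu (mu true) ->
  1 + rho * ln_mix (Gamma mu q true) (Gamma mu q false) nu < 0 ->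
  EI mu q n (L n) (ell n) @[n --> \oo] --> +oo.
Proof.
move=> lnG_pos mix_neg; apply/cvgryPge => A.
have half_gt0 : (0 : R) < 2^-1 by rewrite invr_gt0.
apply: (filterS3 _ _ ell_inside (cvgry_ge (tilt_cvgy lnG_pos) (2 * A))
  (cvgr_lt _ (isolation_cvg0 mix_neg) _ half_gt0)) => n lL T_ge I_lt.
apply: le_trans (EI_ge mu_itv mu_sum q_sym q_itv n lL).
move: T_ge I_lt; set T := _ / (L n).+1%:R; set I := n%:R * expR (_ * ln_mix _ _ _).
move=> T_ge I_lt.
have T0 : 0 <= T by rewrite /T divr_ge0 ?mulr_ge0 ?expR_ge0.
have := mulr_ge0 T0 (_ : 0 <= 2^-1 - I); rewrite subr_ge0 => /(_ (ltW I_lt)); nra.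
Qed.

End Asymptotics.

Unset Implicit Arguments. Set Strict Implicit.

Theorem proposition4 (R : realType) (mu : bool -> R) (q : bool -> bool -> R)
  (rho nustar : R) (L : nat -> nat) :
  (forall b, 0 < mu b < 1) -> mu false + mu true = 1 ->
  (forall a b, q a b = q b a) -> (forall a b, 0 < q a b < 1) ->
  0 < rho ->
  Gamma mu q false < Gamma mu q true ->
  1 + rho * ln (mu false) < 0 ->
  (0 < nustar < mu true) ->
  1 + rho * ln (G nustar (mu true)) = 0 ->
  (forall nu, 0 < nu < mu true -> 1 + rho * ln (G nu (mu true)) = 0 -> nu = nustar) ->
  1 + rho * ln (Gamma mu q true `^ nustar * Gamma mu q false `^ (1 - nustar)) < 0 ->
  (forall n, (0 < L n)%N) ->
  ((fun n : nat => (L n)%:R / (rho * ln (n%:R : R))) @ \oo --> (1 : R)) ->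
  exists nu : R, nustar < nu < mu true /\
    forall ell : nat -> nat,
      (forall n, (ell n <= L n)%N) ->
      ((fun n : nat => (ell n)%:R / (L n)%:R : R) @ \oo --> nu) ->
      (fun n : nat => EI mu q n (L n) (ell n)) @ \oo --> +oo.
Proof.
move=> mu_itv mu_sum q_sym q_itv rho_gt0 _ _ nustar_itv _ nustar_unique nustar_mix
  L_gt0 L_cvg.
have /andP[m_gt0 m_lt1] := mu_itv true.
have /andP[G1_gt0 _] := Gamma_itv mu_itv mu_sum q_itv true.
have /andP[G0_gt0 _] := Gamma_itv mu_itv mu_sum q_itv false.
have lnG_unique y : 0 < y < mu true -> 1 + rho * lnG y (mu true) = 0 -> y = nustar.
  move=> /[dup] y_itv /andP[y_gt0 y_lt_m]; rewrite -ln_G ?m_gt0 ?y_gt0 ?(lt_trans y_lt_m) //.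
  exact: nustar_unique.
rewrite ln_powR_mix // in nustar_mix.
have [nu [nu_range lnG_pos mix_neg]] :=
  exists_nu (mu_itv true) rho_gt0 nustar_itv lnG_unique nustar_mix.
exists nu; split => // ell _ ell_cvg.
apply: (EI_cvgy mu_itv mu_sum q_sym q_itv rho_gt0 _ L_gt0 L_cvg ell_cvg lnG_pos mix_neg).
have /andP[nustar_gt0 _] := nustar_itv; have /andP[nustar_nu nu_m] := nu_range.
by rewrite (lt_trans nustar_gt0 nustar_nu) (lt_trans nu_m).
Qed.
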